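(* Let $D=(E,\mathcal{F})$ be a binary delta-matroid. If every element of $E$ has primal type $u$ in $D$, then $D$ is even, i.e. $|X\Delta Y|$ is even for all $X,Y\in\mathcal{F}$.
   Context: A delta-matroid is a pair $D=(E,\mathcal{F})$ with $E$ finite, $\mathcal{F}$ a nonempty collection of subsets of $E$, such that for all $X,Y\in\mathcal{F}$ and $u\in X\Delta Y$ there is $v\in X\Delta Y$ (possibly $v=u$) with $X\Delta\{u,v\}\in\mathcal{F}$. The twist by $A\subseteq E$ is $D*A=(E,\{A\Delta X:X\in\mathcal{F}\})$. For a symmetric matrix $C$ over $\mathrm{GF}(2)$ indexed by $E$, $D(C)=(E,\{A\subseteq E: C[A]\text{ non-singular}\})$, with $C[A]$ the principal submatrix on $A$ and $C[\emptyset]$ non-singular by convention; a delta-matroid is binary if some twist of it is isomorphic to some $D(C)$. Let $\mathcal{F}_{\min}(D)$ be the set of minimum-cardinality feasible sets. An element $e$ is a ribbon loop if it lies in no member of $\mathcal{F}_{\min}(D)$; a ribbon loop $e$ is orientable if it is not a ribbon loop in $D*e$. An element has primal type $u$ if it is an orientable ribbon loop. *)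

From mathcomp Require Import all_boot all_algebra.
Set Implicit Arguments. Unset Strict Implicit. Unset Printing Implicit Defensive.
Import GRing.Theory.
Local Open Scope ring_scope.

Section DeltaMatroid.
Variable E : finType.

Definition symd (X Y : {set E}) : {set E} := (X :\: Y) :|: (Y :\: X).

Definition is_delta_matroid (F : {set {set E}}) : Prop :=
  F != set0 /\
  forall X Y, X \in F -> Y \in F -> forall u, u \in symd X Y ->
    exists v, v \in symd X Y /\ symd X [set u; v] \in F.

Definition twist (F : {set {set E}}) (A : {set E}) : {set {set E}} :=
  [set symd A X | X in F].

Definition Fmin (F : {set {set E}}) : {set {set E}} :=
  [set X in F | [forall Y in F, #|X| <= #|Y|]%N].

Definition ribbon_loop (F : {set {set E}}) (e : E) : Prop :=
  forall X, X \in Fmin F -> e \notin X.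

Definition orientable_ribbon_loop (F : {set {set E}}) (e : E) : Prop :=
  ribbon_loop F e /\ ~ ribbon_loop (twist F [set e]) e.

Definition primal_type_u (F : {set {set E}}) (e : E) : Prop :=
  orientable_ribbon_loop F e.

Definition even_dm (F : {set {set E}}) : Prop :=
  forall X Y, X \in F -> Y \in F -> ~~ odd #|symd X Y|.
End DeltaMatroid.

(* principal submatrix C[A], rows/columns of A in increasing order *)
Definition principal_submx n (C : 'M['F_2]_n) (A : {set 'I_n}) : 'M['F_2]_#|A| :=
  \matrix_(i < #|A|, j < #|A|) C (enum_val i) (enum_val j).

(* D(C): sets A with C[A] non-singular (C[emptyset] has det 1) *)
Definition DC n (C : 'M['F_2]_n) : {set {set 'I_n}} :=
  [set A : {set 'I_n} | \det (principal_submx C A) != 0].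

Definition binary_dm (E : finType) (F : {set {set E}}) : Prop :=
  exists (A : {set E}) (n : nat) (C : 'M['F_2]_n) (f : E -> 'I_n),
    C^T = C /\ bijective f /\
    [set [set f x | x in X] | X : {set E} in twist F A] = DC C.

From mathcomp Require Import all_boot all_algebra.
From mathcomp Require Import fingroup perm.
Set Implicit Arguments. Unset Strict Implicit. Unset Printing Implicit Defensive.
Import GRing.Theory.
Local Open Scope ring_scope.

(* Since every element is a ribbon loop, the empty set is the unique minimum
   feasible set, and orientability says that no singleton is feasible.  If the
   twist D * A is isomorphic to D(C), this means that C[A] is nonsingular while
   every C[A Δ {j}] is singular.  For a symmetric C over GF(2) the quadratic
   map x ↦ x C xᵀ is the linear form x ↦ Σ_k x_k C_kk, and these singularities
   force that form, hence the diagonal of C, to vanish.  An alternating matrix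
   of odd order is singular in characteristic 2 (pair each permutation with
   its inverse), so every feasible set of D(C), i.e. every A Δ X with X
   feasible, has even size. *)

Section SymmetricDifference.
Variable T : finType.
Implicit Types A X Y : {set T}.

Lemma in_symd X Y i : (i \in symd X Y) = (i \in X) (+) (i \in Y).
Proof. by rewrite /symd !inE; case: (i \in X); case: (i \in Y). Qed.

Lemma symd0 A : symd A set0 = A.
Proof. by apply/setP => i; rewrite in_symd in_set0 addbF. Qed.

Lemma symdxx A : symd A A = set0.
Proof. by apply/setP => i; rewrite in_symd in_set0 addbb. Qed.

Lemma symdK A : involutive (symd A).
Proof. by move=> X; apply/setP => i; rewrite !in_symd addbA addbb. Qed.

Lemma symd_symd A X Y : symd (symd A X) (symd A Y) = symd X Y.
Proof. by apply/setP => i; rewrite !in_symd addbACA addbb. Qed.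

Lemma symd_set1 X j : symd X [set j] = if j \in X then X :\ j else j |: X.
Proof.
apply/setP => i; rewrite in_symd in_set1.
by case: ifP => jX; rewrite !inE; case: eqP => [->|_]; rewrite ?jX ?addbT ?addbF.
Qed.

Lemma odd_symd X Y : odd #|symd X Y| = odd #|X| (+) odd #|Y|.
Proof.
have disjD : (X :\: Y) :&: (Y :\: X) = set0.
  by apply/setP => i; rewrite !inE; case: (i \in X); case: (i \in Y).
rewrite cardsU disjD cards0 subn0 -(cardsID Y X) -(cardsID X Y) setIC !oddD.
by case: (odd #|X :\: Y|); case: (odd #|Y :\: X|); case: (odd #|Y :&: X|).
Qed.

End SymmetricDifference.

Lemma imset_symd (T U : finType) (f : T -> U) (X Y : {set T}) :
  injective f -> f @: symd X Y = symd (f @: X) (f @: Y).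
Proof.
move=> finj; apply/setP => y; rewrite in_symd.
have [/codomP [x ->]|notf] := boolP (y \in codom f).
  by rewrite !mem_imset // in_symd.
have notin Z : y \in f @: Z = false.
  by apply/negbTE; apply: contra notf => /imsetP [x _ ->]; exact: codom_f.
by rewrite !notin.
Qed.

Section DeltaMatroids.
Variable E : finType.
Implicit Types (F : {set {set E}}) (A X : {set E}).

Lemma Fmin_set0 F X : set0 \in F -> X \in Fmin F -> X = set0.
Proof.
move=> F0; rewrite inE => /andP [_ /forall_inP /(_ _ F0)].
by rewrite cards0 leqn0 cards_eq0 => /eqP.
Qed.

Lemma ribbon_loops_set0 F :
  F != set0 -> (forall e, ribbon_loop F e) -> set0 \in F.
Proof.
case/set0Pn => X0 X0F loopF.
have [X XF Xmin] := arg_minnP (fun X : {set E} => #|X|) X0F.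
have XFmin : X \in Fmin F.
  by rewrite inE; apply/andP; split; last apply/forall_inP.
suff <- : X = set0 by [].
by apply/setP => e; rewrite in_set0; apply/negbTE/loopF.
Qed.

Lemma ribbon_loop_twist_set1 F e :
  [set e] \in F -> ribbon_loop (twist F [set e]) e.
Proof.
move=> eF X Xmin; rewrite (Fmin_set0 _ Xmin) ?in_set0 //.
by apply/imsetP; exists [set e]; rewrite ?symdxx.
Qed.

Lemma mem_imset_twist (U : finType) (f : E -> U) F A X : injective f ->
  (f @: symd A X \in [set f @: Y | Y : {set E} in twist F A]) = (X \in F).
Proof.
move=> finj; rewrite !mem_imset //.
  exact: can_inj (symdK A).
exact: imset_inj.
Qed.

Lemma even_dm_of_symd F A :
  (forall X, X \in F -> ~~ odd #|symd A X|) -> even_dm F.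
Proof.
move=> evenA X Y XF YF; rewrite -(symd_symd A) odd_symd.
by rewrite (negbTE (evenA X XF)) (negbTE (evenA Y YF)).
Qed.

End DeltaMatroids.

Section Char2.
Variable R : comNzRingType.
Hypothesis pcharR2 : 2 \in [pchar R].

Lemma sum_involution (T : finType) (g : T -> T) (t : T -> R) :
  involutive g -> (forall x, t (g x) = t x) ->
  \sum_x t x = \sum_(x | g x == x) t x.
Proof.
move=> gK tg; rewrite (bigID (fun x => g x == x)) /=.
suff -> : \sum_(x | g x != x) t x = 0 by rewrite addr0.
pose before x := (enum_rank x < enum_rank (g x))%N.
rewrite (bigID before) /= [in X in _ + X](reindex_inj (can_inj gK)) /=.
rewrite -[RHS](addrr_pchar2 pcharR2 (\sum_(x | (g x != x) && before x) t x)).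
congr (_ + _); apply: eq_big => x; last by rewrite tg.
rewrite /before gK ltnNge negbK ltn_neqAle val_eqE (inj_eq enum_rank_inj).
by rewrite [x == g x]eq_sym andbA andbb.
Qed.

Lemma quad_form_pchar2 n (C : 'M[R]_n) (x : 'rV[R]_n) : C^T = C ->
  \sum_k x 0 k * (x *m C) 0 k = \sum_k x 0 k ^+ 2 * C k k.
Proof.
move=> Csym; have Ce i j : C i j = C j i by rewrite -{1}Csym mxE.
under eq_bigr do rewrite mxE mulr_sumr.
rewrite pair_big /= (@sum_involution _ (fun p => (p.2, p.1))); last 2 first.
- by case.
- by case=> k l /=; rewrite Ce mulrCA.
rewrite (eq_bigl (fun p => predT p.1 && (p.2 == p.1))); last first.
  by case=> k l /=; rewrite xpair_eqE [k == l]eq_sym andbb.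
rewrite -(pair_big_dep predT (fun k l => l == k)
                       (fun k l => x 0 k * (x 0 l * C l k))) /=.
by apply: eq_bigr => k _; rewrite big_pred1_eq mulrA -expr2.
Qed.

End Char2.

Lemma involution_fixed_point (T : finType) (g : T -> T) :
  involutive g -> odd #|T| -> exists x, g x = x.
Proof.
move=> gK oddT.
have [x /eqP|fixfree] := pickP (fun x => g x == x); first by exists x.
have := @sum_involution _ (pchar_Fp (isT : prime 2)) _ _ (fun=> 1) gK
                        (fun=> erefl).
rewrite [X in _ = X]big_pred0 // sumr_const.
rewrite -(Fp_nat_mod (isT : prime 2)) modn2 oddT.
by move/eqP; rewrite oner_eq0.
Qed.

Lemma det_alternate_odd (R : comNzRingType) m (P : 'M[R]_m) :
  2 \in [pchar R] -> P^T = P -> (forall i, P i i = 0) -> odd m ->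
  \det P = 0.
Proof.
move=> pcharR2 Psym Pdiag oddm.
have Pe i j : P i j = P j i by rewrite -{1}Psym mxE.
rewrite /determinant.
rewrite (@sum_involution _ pcharR2 _ (fun s : 'S_m => s^-1)%g); last 2 first.
- exact: invgK.
- move=> s; rewrite odd_permV (reindex_inj (@perm_inj _ s)) /=.
  by congr (_ * _); apply: eq_bigr => i _; rewrite permK Pe.
apply: big1 => s /eqP sK.
have [i si] : exists i, s i = i.
  apply: involution_fixed_point; rewrite ?card_ord //.
  by move=> i; rewrite -{1}sK permK.
by rewrite (bigD1 i) //= si Pdiag mul0r mulr0.
Qed.

Lemma F2_neq0 (x : 'F_2) : x != 0 -> x = 1.
Proof. by case: x => [[|[|k]] //] ? _; exact: val_inj. Qed.

Lemma F2_sqr (x : 'F_2) : x ^+ 2 = x.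
Proof. by have [->|/F2_neq0->] := eqVneq x 0; rewrite ?expr0n ?expr1n. Qed.

Section PrincipalMinors.
Variables (n : nat) (C : 'M['F_2]_n).
Implicit Types (S : {set 'I_n}) (x y : 'rV['F_2]_n).

Definition supported S x := forall i, i \notin S -> x 0 i = 0.

Definition degenerate_on S :=
  exists x, [/\ x != 0, supported S x & {in S, forall i, (x *m C) 0 i = 0}].

Lemma notin_DCP S : reflect (degenerate_on S) (S \notin DC C).
Proof.
pose ext : 'M['F_2]_(#|S|, n) := rowsub enum_val 1%:M.
pose res : 'M['F_2]_(n, #|S|) := colsub enum_val 1%:M.
have resE x k : (x *m res) 0 k = x 0 (enum_val k).
  by rewrite mulmx_colsub mulmx1 mxE.
have extK : ext *m res = 1%:M.
  apply/matrixP => k l; rewrite /ext /res mul_rowsub_mx mul1mx !mxE.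
  by rewrite (inj_eq enum_val_inj).
have minorE : principal_submx C S = ext *m C *m res.
  apply/matrixP => k l.
  by rewrite /ext /res mulmx_colsub mulmx1 mul_rowsub_mx mul1mx !mxE.
have ext_supported w : supported S (w *m ext).
  move=> i iS; rewrite mxE big1 // => k _; rewrite !mxE.
  have /negbTE-> : enum_val k != i.
    by apply: contraNneq iS => <-; exact: enum_valP.
  by rewrite mulr0.
have resK x : supported S x -> x *m res *m ext = x.
  move=> xS; apply/rowP => i; have [iS|iS] := boolP (i \in S); last first.
    by rewrite ext_supported ?xS.
  rewrite mxE (eq_bigr (fun k => x 0 (enum_val k) * (enum_val k == i)%:R)).
    rewrite -(big_enum_val (fun l => x 0 l * (l == i)%:R)) (bigD1 i) //=.
    rewrite eqxx mulr1 big1 ?addr0 // => l /andP [_ /negbTE->].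
    by rewrite mulr0.
  by move=> k _; rewrite resE !mxE.
rewrite inE negbK; apply: (iffP det0P) => [[w w0 wM] | [x [x0 xS xC]]].
  exists (w *m ext); split => //.
    by apply: contraNneq w0 => x0; rewrite -[w]mulmx1 -extK mulmxA x0 mul0mx.
  move=> i iS; rewrite -(enum_rankK_in iS iS) -resE.
  by rewrite -!mulmxA (mulmxA ext) -minorE wM mxE.
exists (x *m res).
  by apply: contraNneq x0 => w0; rewrite -(resK x xS) w0 mul0mx.
rewrite minorE !mulmxA resK //; apply/rowP => k.
by rewrite resE xC ?mxE //; exact: enum_valP.
Qed.

Lemma nondegenerate_eq0 S x : ~ degenerate_on S -> supported S x ->
  {in S, forall i, (x *m C) 0 i = 0} -> x = 0.
Proof.
move=> nondegS xS xC; apply/eqP; apply: contra_notT nondegS => x0.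
by exists x.
Qed.

Definition diag_form x : 'F_2 := (x *m \col_k C k k) 0 0.

Lemma diag_form_delta j : diag_form (delta_mx 0 j) = C j j.
Proof. by rewrite /diag_form -rowE !mxE. Qed.

Lemma diag_formB x y : diag_form (x - y) = diag_form x - diag_form y.
Proof. by rewrite /diag_form mulmxBl mxE [X in _ + X]mxE. Qed.

Hypothesis Csym : C^T = C.

Lemma diag_formE x : diag_form x = \sum_k x 0 k * (x *m C) 0 k.
Proof.
rewrite quad_form_pchar2 // /diag_form mxE.
by apply: eq_bigr => k _; rewrite F2_sqr mxE.
Qed.

Lemma diag_form_annihilated S x : supported S x ->
  {in S, forall i, (x *m C) 0 i = 0} -> diag_form x = 0.
Proof.
move=> xS xC; rewrite diag_formE big1 // => k _.
by have [/xC->|/xS->] := boolP (k \in S); rewrite ?mulr0 ?mul0r.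
Qed.

(* z is the j-th row of C[S]^-1 extended by zero; its diagonal form vanishes
   because it already lies in the kernel of C[S :\ j]. *)
Lemma dual_vector S j :
  ~ degenerate_on S -> degenerate_on (S :\ j) -> j \in S ->
  exists z, [/\ supported S z, diag_form z = 0
              & {in S, forall i, (z *m C) 0 i = (i == j)%:R}].
Proof.
move=> nondegS [z [z0 zSj zC]] jS; exists z; split.
- by move=> i iS; apply: zSj; rewrite !inE (negbTE iS) andbF.
- exact: diag_form_annihilated zSj zC.
move=> i iS; have [->|ij] := eqVneq i j; last by apply: zC; rewrite !inE ij.
apply: F2_neq0; apply: contra_notN nondegS => /eqP zCj.
exists z; split => //.
  by move=> k kS; apply: zSj; rewrite !inE (negbTE kS) andbF.
by move=> k kS; have [->//|kj] := eqVneq k j; apply: zC; rewrite !inE kj.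
Qed.

Lemma diag_form_supported_eq0 S : ~ degenerate_on S ->
  (forall j, j \in S -> degenerate_on (S :\ j)) ->
  forall x, supported S x -> diag_form x = 0.
Proof.
move=> nondegS degSj.
have /fin_all_exists [z zP] : forall j, exists zj, j \in S ->
    [/\ supported S zj, diag_form zj = 0
      & {in S, forall i, (zj *m C) 0 i = (i == j)%:R}].
  move=> j; have [jS|_] := boolP (j \in S); last by exists 0.
  by have [zj zjP] := dual_vector nondegS (degSj j jS) jS; exists zj.
move=> x xS; pose y := \sum_(j in S) (x *m C) 0 j *: z j.
have yS : supported S y.
  move=> i iS; rewrite summxE big1 // => j jS.
  by have [zS _ _] := zP j jS; rewrite mxE zS ?mulr0.
have yC : {in S, forall i, (y *m C) 0 i = (x *m C) 0 i}.
  move=> i iS; rewrite mulmx_suml summxE (bigD1 i) //= big1.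
    by have [_ _ zC] := zP i iS; rewrite -scalemxAl mxE zC // eqxx mulr1 addr0.
  move=> j /andP [jS ji]; have [_ _ zC] := zP j jS.
  by rewrite -scalemxAl mxE zC // eq_sym (negbTE ji) mulr0.
have <- : y = x.
  apply/subr0_eq/(nondegenerate_eq0 nondegS) => i iS.
    by rewrite mxE [X in _ + X]mxE yS ?xS ?subr0.
  by rewrite mulmxBl mxE [X in _ + X]mxE yC ?subrr.
rewrite /y /diag_form mulmx_suml summxE big1 // => j jS; have [_ zF _] := zP j jS.
by rewrite -scalemxAl mxE -/(diag_form (z j)) zF mulr0.
Qed.

Lemma DC_diag_eq0 S : S \in DC C -> (forall j, symd S [set j] \notin DC C) ->
  forall j, C j j = 0.
Proof.
move=> SC SjC.
have nondegS : ~ degenerate_on S by move/notin_DCP; rewrite SC.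
have degSj j : degenerate_on (symd S [set j]) by exact/notin_DCP.
have diagS : forall x, supported S x -> diag_form x = 0.
  apply: diag_form_supported_eq0 => // j jS.
  by have := degSj j; rewrite symd_set1 jS.
move=> j; rewrite -diag_form_delta; have [jS|jS] := boolP (j \in S).
  apply: diagS => i iS; rewrite mxE eqxx /=.
  by have /negbTE-> : i != j by apply: contraNneq iS => ->.
have [v [v0 vSj vC]] : degenerate_on (j |: S).
  by have := degSj j; rewrite symd_set1 (negbTE jS).
have vj : v 0 j = 1.
  apply: F2_neq0; apply: contra_notN nondegS => /eqP vj0.
  exists v; split => // i iS; last by apply: vC; rewrite !inE iS orbT.
  by have [->//|ij] := eqVneq i j; apply: vSj; rewrite !inE (negbTE ij).
have vjS : supported S (v - delta_mx 0 j).
  move=> i iS; rewrite !mxE eqxx /=.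
  have [->|ij] := eqVneq i j; first by rewrite vj subrr.
  by rewrite vSj ?subr0 // !inE (negbTE ij).
rewrite -[delta_mx 0 j](subKr v) diag_formB (diagS _ vjS) subr0.
exact: diag_form_annihilated vSj vC.
Qed.

Lemma DC_even Y : (forall i, C i i = 0) -> Y \in DC C -> ~~ odd #|Y|.
Proof.
move=> Cdiag; rewrite inE; apply: contra => oddY; apply/eqP.
have Ce i j : C i j = C j i by rewrite -{1}Csym mxE.
apply: det_alternate_odd => //.
  by apply/matrixP => i j; rewrite !mxE Ce.
by move=> i; rewrite mxE Cdiag.
Qed.

End PrincipalMinors.

Theorem lemma4 (E : finType) (F : {set {set E}}) :
  is_delta_matroid F -> binary_dm F ->
  (forall e : E, primal_type_u F e) ->
  even_dm F.
Proof.
move=> [Fn0 _] [A [n [C [f [Csym [fbij twistE]]]]]] typeu.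
have finj := bij_inj fbij; have [g _ gK] := fbij.
have memDC X : (f @: symd A X \in DC C) = (X \in F).
  by rewrite -twistE mem_imset_twist.
have F0 : set0 \in F by apply: ribbon_loops_set0 => // e; case: (typeu e).
have notF1 e : [set e] \notin F.
  by apply/negP => /ribbon_loop_twist_set1; case: (typeu e).
have Cdiag : forall j, C j j = 0.
  apply: (DC_diag_eq0 Csym (S := f @: A)) => [|j].
    by rewrite -(symd0 A) memDC.
  by rewrite -(gK j) -imset_set1 -imset_symd // memDC.
apply: (even_dm_of_symd (A := A)) => X XF.
by rewrite -(card_imset _ finj) (DC_even Csym Cdiag) ?memDC.
Qed.
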